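(* Let $G$ be a graph, $V(G)=V_1\uplus\dots\uplus V_\ell$ a partition, $Z\subseteq V(G)$, and let $(\mathfrak T,\gamma)$ be the rooted decomposition of $G-Z$ into $2$-connected components. If $I_1,I_2$ are two distinct segments, then $B_Z(I_1)\cap B_Z(I_2)=\emptyset$.
   Context: A graph is 2-connected if it is connected and has no cut vertex (so $K_1$ and $K_2$ count as 2-connected); a 2-connected component of a graph is an inclusion-maximal vertex set inducing a 2-connected subgraph. Rooted decomposition: $\mathfrak T$ is a forest whose nodes $t$ correspond to the 2-connected components $\gamma(t)\subseteq V(G)\setminus Z$ of $G-Z$; it is obtained from the block-cut forest of $G-Z$ by fixing, in each connected component, a root block (say the lexicographically smallest), and letting the parent of a non-root block $C$ be the block containing the cut vertex that separates $C$ from the root (i.e. the grandparent of $C$ in the rooted block-cut forest). An $i$-segment is a connected component of $G[V_i\setminus Z]$; a segment is an $i$-segment for some $i$. For a segment $I$, $r_Z(I)$ is the unique node $t$ of $\mathfrak T$ closest to a root with $I\cap\gamma(t)\neq\emptyset$, and the body is $B_Z(I)=\{t\in V(\mathfrak T)\setminus\{r_Z(I)\}: I\cap\gamma(t)\ne\emptyset\}$. *)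

From mathcomp Require Import all_boot.
Set Implicit Arguments. Unset Strict Implicit. Unset Printing Implicit Defensive.

Section Defs.
Variable T : finType.
Variable e : rel T.

Definition rel_in (S : {set T}) : rel T :=
  fun x y => [&& x \in S, y \in S & e x y].
Definition conn_in (S : {set T}) (x y : T) : bool := connect (rel_in S) x y.
Definition connected_in (S : {set T}) : bool :=
  (S != set0) && [forall x in S, forall y in S, conn_in S x y].
Definition cut_vertex (S : {set T}) (v : T) : bool :=
  (v \in S) && [exists x in S :\ v, exists y in S :\ v, ~~ conn_in (S :\ v) x y].
(* G[S] is 2-connected: connected with no cut vertex (K1, K2 count) *)
Definition two_connected (S : {set T}) : bool :=
  connected_in S && [forall v, ~~ cut_vertex S v].

(* C is a 2-connected component of G - Z: inclusion-maximal vertex set of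
   V(G) \ Z inducing a 2-connected subgraph *)
Definition block (Z C : {set T}) : bool :=
  [&& C \subset ~: Z, two_connected C &
      [forall D : {set T},
         [&& D \subset ~: Z, two_connected D & C \subset D] ==> (D == C)]].

Definition same_comp (Z C R : {set T}) : bool :=
  [exists x in C, exists y in R, conn_in (~: Z) x y].

Definition valid_roots (Z : {set T}) (Rt : {set {set T}}) : bool :=
  [forall R in Rt, block Z R] &&
  [forall C, block Z C ==> (#|[set R in Rt | same_comp Z C R]| == 1)].

Definition root_of (Z : {set T}) (Rt : {set {set T}}) (C : {set T}) : {set T} :=
  odflt set0 [pick R in Rt | same_comp Z C R].

Definition sep_vertex (Z R C : {set T}) (c : T) : bool :=
  [&& c \in C, C :\ c != set0, R :\ c != set0 &
      [forall x in C :\ c, forall y in R :\ c, ~~ conn_in ((~: Z) :\ c) x y]].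

(* P is the parent of the non-root block C in the rooted decomposition:
   P is the block (other than C) containing the separating cut vertex c
   that lies on the root side of c (the grandparent of C in the rooted
   block-cut forest) *)
Definition tparent (Z : {set T}) (Rt : {set {set T}}) (C P : {set T}) : bool :=
  [&& block Z C, C \notin Rt, block Z P, P != C &
      [exists c, [&& sep_vertex Z (root_of Z Rt C) C c, c \in P &
         [exists x in P :\ c, exists y in root_of Z Rt C :\ c,
            conn_in ((~: Z) :\ c) x y]]]].

Definition tpar (Z : {set T}) (Rt : {set {set T}}) (C : {set T}) : option {set T} :=
  [pick P | tparent Z Rt C P].

(* depth of node C in the forest = number of parent steps to reach a root *)
Definition depth (Z : {set T}) (Rt : {set {set T}}) (C : {set T}) : nat :=
  find (fun n => iter n.+1 (obind (tpar Z Rt)) (Some C) == None)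
       (iota 0 #|{set T}|).

Definition meets (I C : {set T}) : bool := I :&: C != set0.

Definition rZ (Z : {set T}) (Rt : {set {set T}}) (I : {set T}) : option {set T} :=
  [pick t | [&& block Z t, meets I t &
     [forall t', (block Z t' && meets I t') ==> (depth Z Rt t <= depth Z Rt t')]]].

Definition body (Z : {set T}) (Rt : {set {set T}}) (I : {set T}) : {set {set T}} :=
  [set t | [&& block Z t, meets I t & Some t != rZ Z Rt I]].

Definition segment (l : nat) (part : T -> 'I_l) (Z I : {set T}) : bool :=
  [exists i : 'I_l,
     let Si := [set v | part v == i] :\: Z in
     [exists x in Si, I == [set y in Si | conn_in Si x y]]].

End Defs.

From mathcomp Require Import all_boot.
Set Implicit Arguments. Unset Strict Implicit. Unset Printing Implicit Defensive.

(* Every block t of the body of a segment I hangs from its parent at a cut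
   vertex c, and c lies in I: otherwise I, being connected and avoiding c,
   would lie entirely in the branch of G - Z - c below t, so the node r_Z(I)
   of minimal depth meeting I would be a strict descendant of t, deeper than
   t although t meets I too.  Since a vertex lies in only one segment, no
   block belongs to two bodies. *)

Lemma find_iota_least (a : pred nat) n d : d < n -> a d ->
  a (find a (iota 0 n)) /\ forall j, j < find a (iota 0 n) -> ~~ a j.
Proof.
move=> dn ad; have has_a : has a (iota 0 n) by apply/hasP; exists d; rewrite ?mem_iota.
have fn : find a (iota 0 n) < n by rewrite -[n in _ < n](size_iota 0) -has_find.
split; first by have := nth_find 0 has_a; rewrite nth_iota.
move=> j jf; have := before_find 0 jf; rewrite nth_iota ?add0n => [->//|].
exact: ltn_trans fn.
Qed.

Lemma iter_obind_None (A : Type) (f : A -> option A) k : iter k (obind f) None = None.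
Proof. by elim: k => //= k ->. Qed.

Section BlockForest.
Variable T : finType.
Variable e : rel T.
Hypothesis e_sym : symmetric e.

Local Notation conn := (conn_in e).
Implicit Types (S A B D K C P Q R : {set T}) (x y z w u v c : T).

(** * Connectivity in induced subgraphs *)

Lemma rel_in_sym S : symmetric (rel_in e S).
Proof. by move=> x y; rewrite /rel_in e_sym andbCA. Qed.

Lemma conn_in_sym S x y : conn S x y = conn S y x.
Proof. exact: (sym_connect_sym (@rel_in_sym S)). Qed.

Lemma conn_in_refl S x : conn S x x.
Proof. exact: connect0. Qed.

Lemma conn_in_trans S x y z : conn S x y -> conn S y z -> conn S x z.
Proof. exact: connect_trans. Qed.

Lemma conn_in_sub S S' x y : S \subset S' -> conn S x y -> conn S' x y.
Proof.
move=> sS; apply: connect_sub => u v /and3P[uS vS euv].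
by apply: connect1; rewrite /rel_in (subsetP sS _ uS) (subsetP sS _ vS).
Qed.

Lemma conn_in_edge S x y : x \in S -> y \in S -> e x y -> conn S x y.
Proof. by move=> xS yS exy; apply: connect1; rewrite /rel_in xS yS. Qed.

Lemma conn_in_mem S x y : conn S x y -> x != y -> y \in S.
Proof.
move=> /connectP[p pp ->]; elim: p x pp => [|a p IH] x /=; first by rewrite eqxx.
case/andP=> /and3P[_ aS _] pp _; case: (eqVneq a (last a p)) => [<-//|].
exact: IH.
Qed.

Lemma conn_in_hub S h : (forall x, x \in S -> conn S x h) ->
  forall x y, x \in S -> y \in S -> conn S x y.
Proof.
by move=> H x y xS yS; apply: (conn_in_trans (H x xS)); rewrite conn_in_sym; apply: H.
Qed.

Lemma conn_in_setI S A x y :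
  conn S x y -> (forall w, conn S x w -> w \in A) -> conn (S :&: A) x y.
Proof.
move=> /connectP[p pp ->]; elim: p x pp => [|a p IH] x /= => [_ _|/andP[exa pp] hA].
  exact: connect0.
have [xS aS exa'] := and3P exa; have xa : conn S x a by apply: connect1.
apply: (@conn_in_trans _ _ a).
  have xA : x \in A by apply: hA; apply: connect0.
  by apply: conn_in_edge; rewrite // inE ?xS ?aS ?xA ?(hA _ xa).
by apply: IH => // w aw; apply: hA; apply: conn_in_trans aw.
Qed.

Lemma connect_exit_edge (r : rel T) (a : pred T) x y :
  connect r x y -> a x -> ~~ a y -> exists u w, [/\ r u w, a u & ~~ a w].
Proof.
move=> /connectP[p pp ->]; elim: p x pp => [|z p IH] x /=; first by move=> _ ->.
case/andP=> rxz pp ax nay; case az: (a z); first exact: IH az nay.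
by exists x, z; rewrite az.
Qed.

Lemma path_rel_in S x p : path (rel_in e S) x p -> path e x p /\ {subset p <= S}.
Proof.
elim: p x => [|a p IH] x //= /andP[/and3P[_ aS exa] /IH[pp pS]].
by rewrite exa pp; split=> // w; rewrite inE => /orP[/eqP->|/pS].
Qed.

Lemma path_conn_in S x p z : path e x p -> {subset x :: p <= S} ->
  z \in x :: p -> conn S x z /\ conn S z (last x p).
Proof.
elim: p x z => [|a p IH] x z /=.
  by move=> _ _; rewrite inE => /eqP->; split; apply: conn_in_refl.
case/andP=> exa pp sub; have sub' : {subset a :: p <= S}.
  by move=> w wp; apply: sub; rewrite inE wp orbT.
have xa : conn S x a by apply: conn_in_edge; rewrite ?sub ?inE ?eqxx ?orbT.
rewrite inE => /orP[/eqP->|zp].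
  split; first exact: conn_in_refl.
  exact: conn_in_trans xa (proj2 (IH a a pp sub' (mem_head _ _))).
by have [az zl] := IH a z pp sub' zp; split=> //; apply: conn_in_trans az.
Qed.

(* Deleting one vertex v from a simple path leaves two subpaths, each
   containing an endpoint. *)
Lemma uniq_path_conn_in_end S x p v z : path e x p -> uniq (x :: p) ->
  {subset x :: p <= S} -> z \in x :: p -> z != v ->
  conn (S :\ v) z x \/ conn (S :\ v) z (last x p).
Proof.
elim: p x z => [|a p IH] x z /=.
  by move=> _ _ _; rewrite inE => /eqP-> _; left; apply: conn_in_refl.
case/andP=> exa pp /andP[xNp up] sub; rewrite inE => /orP[/eqP-> _|zp zv].
  by left; apply: conn_in_refl.
have sub' : {subset a :: p <= S} by move=> w wp; apply: sub; rewrite inE wp orbT.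
case: (eqVneq x v) => [xv|xv].
  right; apply: (proj2 (@path_conn_in _ a p z pp _ zp)) => w wp.
  by rewrite !inE sub' // andbT; apply: contraNneq xNp => wv; rewrite xv -wv.
have [zx|] := IH a z pp up sub' zp zv; last by right.
left; apply: (conn_in_trans zx); have av : a != v.
  by case: (eqVneq z a) zx => [<-//|za /conn_in_mem/(_ za)]; rewrite !inE => /andP[].
by apply: conn_in_edge; rewrite 1?e_sym // !inE ?av ?xv sub // !inE eqxx ?orbT.
Qed.

Lemma two_connected_neq0 S : two_connected e S -> S != set0.
Proof. by case/andP=> /andP[]. Qed.

Lemma two_connected_conn S x y :
  two_connected e S -> x \in S -> y \in S -> conn S x y.
Proof.
case/andP=> /andP[_ /forallP/(_ x)/implyP H] _ xS yS.
by move/(_ xS)/forallP/(_ y)/implyP: H; apply.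
Qed.

Lemma two_connected_connD1 S v x y :
  two_connected e S -> x \in S :\ v -> y \in S :\ v -> conn (S :\ v) x y.
Proof.
move=> tS; have /andP[_ /forallP/(_ v)] := tS; rewrite negb_and.
case/orP=> [vNS | /existsPn H] xv yv.
  have [[_ xS] [_ yS]] := (setD1P xv, setD1P yv).
  apply: conn_in_sub (two_connected_conn tS xS yS).
  by apply/subsetP => w wS; rewrite !inE wS andbT; apply: contraNneq vNS => <-.
by have := H x; rewrite xv => /existsPn/(_ y); rewrite yv negbK.
Qed.

Lemma two_connectedI S : S != set0 ->
  (forall x y, x \in S -> y \in S -> conn S x y) ->
  (forall v x y, x \in S :\ v -> y \in S :\ v -> conn (S :\ v) x y) ->
  two_connected e S.
Proof.
move=> S0 H1 H2; apply/andP; split.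
  rewrite /connected_in S0; apply/forall_inP => x xS; apply/forall_inP => y yS.
  exact: H1.
apply/forallP => v; apply/negP => /andP[_ /exists_inP[x xv /exists_inP[y yv /negP]]].
by apply; apply: H2.
Qed.

Lemma two_connected_edge a b : e a b -> two_connected e [set a; b].
Proof.
move=> eab.
have K S x y : x \in [set a; b] -> y \in [set a; b] -> x \in S -> y \in S -> conn S x y.
  rewrite !inE => /orP[]/eqP-> /orP[]/eqP-> aS bS; rewrite ?conn_in_refl //.
    exact: conn_in_edge.
  by rewrite conn_in_sym; apply: conn_in_edge.
apply: two_connectedI; first by apply/set0Pn; exists a; rewrite !inE eqxx.
  by move=> x y xS yS; apply: K.
move=> v x y xv yv; apply: (K _ _ _ _ _ xv yv).
  by case/setD1P: xv.
by case/setD1P: yv.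
Qed.

Lemma two_connected_ear S1 S2 c x p :
  two_connected e S1 -> two_connected e S2 -> c \in S1 -> c \in S2 ->
  x \in S1 -> path e x p -> uniq (x :: p) -> c \notin x :: p -> last x p \in S2 ->
  two_connected e (S1 :|: S2 :|: [set w in x :: p]).
Proof.
move=> t1 t2 c1 c2 x1 pp up cNp l2; set K := _ :|: _.
have s1K : S1 \subset K by rewrite /K -setUA subsetUl.
have s2K : S2 \subset K by rewrite /K -setUA setUCA subsetUl.
have pK : {subset x :: p <= K} by move=> w wp; rewrite /K in_setU in_set wp orbT.
have connD1 S v z h : S \subset K -> two_connected e S -> z \in S :\ v -> h \in S :\ v ->
    conn (K :\ v) z h.
  by move=> sSK tS zS hS; apply: conn_in_sub (setSD _ sSK) (two_connected_connD1 tS zS hS).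
apply: two_connectedI.
- by apply/set0Pn; exists c; rewrite !inE c1.
- apply: (@conn_in_hub _ c) => z; rewrite !in_setU in_set => /orP[/orP[] zS | zp].
  + exact: conn_in_sub s1K (two_connected_conn t1 zS c1).
  + exact: conn_in_sub s2K (two_connected_conn t2 zS c2).
  + rewrite conn_in_sym; apply: conn_in_trans (conn_in_sub s1K (two_connected_conn t1 c1 x1)) _.
    exact: (proj1 (path_conn_in pp pK zp)).
move=> v; case: (eqVneq v c) => [->|vc].
  have pKc : {subset x :: p <= K :\ c}.
    by move=> w wp; rewrite in_setD1 pK // andbT; apply: contraNneq cNp => <-.
  have xc : x \in S1 :\ c.
    by rewrite in_setD1 x1 andbT; apply: contraNneq cNp => <-; apply: mem_head.
  have lc : last x p \in S2 :\ c.
    by rewrite in_setD1 l2 andbT; apply: contraNneq cNp => <-; apply: mem_last.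
  have [_ xl] := path_conn_in pp pKc (mem_head _ _).
  apply: (@conn_in_hub _ x) => z.
  rewrite in_setD1 !in_setU in_set => /andP[zc /orP[/orP[] zS | zp]].
  + by apply: (connD1 S1) => //; rewrite !inE zc.
  + rewrite conn_in_sym; apply: conn_in_trans xl _.
    by apply: (connD1 S2) => //; rewrite !inE zc.
  + by rewrite conn_in_sym; apply: (proj1 (path_conn_in pp pKc zp)).
have cv1 : c \in S1 :\ v by rewrite !inE c1 andbT eq_sym.
have cv2 : c \in S2 :\ v by rewrite !inE c2 andbT eq_sym.
apply: (@conn_in_hub _ c) => z.
rewrite in_setD1 !in_setU in_set => /andP[zv /orP[/orP[] zS | zp]].
- by apply: (connD1 S1) => //; rewrite !inE zv.
- by apply: (connD1 S2) => //; rewrite !inE zv.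
have [zx|zl] := uniq_path_conn_in_end pp up pK zp zv.
  have xv : x \in S1 :\ v.
    rewrite !inE x1 andbT; case: (eqVneq z x) => [<-//|zx'].
    by have := conn_in_mem zx zx'; rewrite !inE => /andP[].
  by apply: conn_in_trans zx (connD1 S1 _ _ _ _ _ _ _).
have lv : last x p \in S2 :\ v.
  rewrite !inE l2 andbT; case: (eqVneq z (last x p)) => [<-//|zl'].
  by have := conn_in_mem zl zl'; rewrite !inE => /andP[].
by apply: conn_in_trans zl (connD1 S2 _ _ _ _ _ _ _).
Qed.

Definition comp_in S x := [set y in S | conn S x y].

Lemma comp_in_eq S x c : c \in comp_in S x -> comp_in S x = comp_in S c.
Proof.
rewrite inE => /andP[_ xc]; apply/setP => y; rewrite !inE; case: (y \in S) => //=.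
apply/idP/idP => [xy | cy]; last exact: conn_in_trans cy.
by rewrite conn_in_sym in xc; apply: conn_in_trans xy.
Qed.

Lemma comp_in_conn S x a b :
  a \in comp_in S x -> b \in comp_in S x -> conn (comp_in S x) a b.
Proof.
move=> aC; rewrite (comp_in_eq aC) => bC.
have aS : a \in S by move: aC; rewrite inE => /andP[].
have := @conn_in_setI S (comp_in S a) a b.
have -> : S :&: comp_in S a = comp_in S a.
  by apply/setIidPr/subsetP => y; rewrite inE => /andP[].
move: bC; rewrite inE => /andP[_ ab]; apply=> // w aw; rewrite inE aw andbT.
by case: (eqVneq a w) aw => [<-//|/[swap] /conn_in_mem/[apply]].
Qed.

(** * Blocks and segments of G - Z *)

Variable Z : {set T}.
Local Notation V := (~: Z).

Lemma block_sub B : block e Z B -> B \subset V.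
Proof. by case/and3P. Qed.

Lemma block_two_connected B : block e Z B -> two_connected e B.
Proof. by case/and3P. Qed.

Lemma block_max B D :
  block e Z B -> D \subset V -> two_connected e D -> B \subset D -> D = B.
Proof. by case/and3P=> _ _ /forallP/(_ D)/implyP H DV tD BD; apply/eqP/H; rewrite DV tD. Qed.

Lemma block_exists S :
  S \subset V -> two_connected e S -> exists2 B, block e Z B & S \subset B.
Proof.
move=> SV tS; pose P D := [&& D \subset V, two_connected e D & S \subset D].
have PS : P S by rewrite /P SV tS subxx.
case: (@arg_maxnP _ S P (fun D => #|D|) PS) => B /and3P[BV tB SB] Bmax.
exists B => //; rewrite /block BV tB; apply/forall_inP => D /and3P[DV tD BD].
by rewrite eq_sym eqEcard BD /=; apply: Bmax; rewrite /P DV tD (subset_trans SB BD).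
Qed.

Lemma block_neq0 B : block e Z B -> exists x, x \in B.
Proof. by move/block_two_connected/two_connected_neq0/set0Pn. Qed.

Lemma block_conn B x y : block e Z B -> x \in B -> y \in B -> conn V x y.
Proof.
move=> bB xB yB.
exact: conn_in_sub (block_sub bB) (two_connected_conn (block_two_connected bB) xB yB).
Qed.

Lemma block_subD1 B c : block e Z B -> c \notin B -> B \subset V :\ c.
Proof.
move=> bB cB; apply/subsetP => w wB; rewrite in_setD1 (subsetP (block_sub bB)) // andbT.
by apply: contraNneq cB => <-.
Qed.

Lemma block_setD1_neq0 B D c :
  block e Z B -> block e Z D -> B != D -> c \in D -> B :\ c != set0.
Proof.
move=> bB bD BD cD; apply: contraNneq BD => B0; apply/eqP/esym.
apply: (block_max bB (block_sub bD) (block_two_connected bD)).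
apply/subsetP => w wB; case: (eqVneq w c) => [->//|wc].
have : w \in B :\ c by rewrite !inE wc.
by rewrite B0 inE.
Qed.

Lemma block_eq_of_connD1 B1 B2 c x y :
  block e Z B1 -> block e Z B2 -> c \in B1 -> c \in B2 ->
  x \in B1 :\ c -> y \in B2 :\ c -> conn (V :\ c) x y -> B1 = B2.
Proof.
move=> b1 b2 c1 c2 xB1 yB2 /connectP[p /path_rel_in[pe pV] yl]; subst y; move: yB2.
case: (shortenP pe) => q qe uq qp yB2.
have [xc x1] := setD1P xB1; have [_ y2] := setD1P yB2.
have qVc : {subset q <= V :\ c} by move=> w /qp/pV.
have cNq : c \notin x :: q.
  by rewrite inE negb_or eq_sym xc; apply/negP => /qVc; rewrite !inE eqxx.
have tK := two_connected_ear (block_two_connected b1) (block_two_connected b2)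
  c1 c2 x1 qe uq cNq y2.
have KV : B1 :|: B2 :|: [set w in x :: q] \subset V.
  rewrite !subUset (block_sub b1) (block_sub b2); apply/subsetP => w.
  rewrite in_set inE => /orP[/eqP->|/qVc]; first exact: subsetP (block_sub b1) x x1.
  by case/setD1P.
have KB1 := block_max b1 KV tK (subset_trans (subsetUl _ _) (subsetUl _ _)).
apply: (block_max b2 (block_sub b1) (block_two_connected b1)).
by rewrite -KB1 -setUA setUCA subsetUl.
Qed.

Section Segments.
Variables (l : nat) (part : T -> 'I_l).

Local Notation class i := ([set v | part v == i] :\: Z).

Lemma segmentP I : segment e part Z I -> exists i x, I = comp_in (class i) x.
Proof. by case/existsP=> i /exists_inP[x _ /eqP->]; exists i, x. Qed.

Lemma segment_sub I : segment e part Z I -> I \subset V.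
Proof.
case/segmentP=> i [x ->]; apply/subsetP => y; rewrite !inE => /andP[/andP[yNZ _] _].
by rewrite yNZ.
Qed.

Lemma segment_conn I a b : segment e part Z I -> a \in I -> b \in I -> conn I a b.
Proof. by case/segmentP=> i [x ->]; apply: comp_in_conn. Qed.

Lemma segment_eq I1 I2 c :
  segment e part Z I1 -> segment e part Z I2 -> c \in I1 -> c \in I2 -> I1 = I2.
Proof.
case/segmentP=> i [x ->] /segmentP[j [y ->]] cI1 cI2.
have partc k z : c \in comp_in (class k) z -> part c = k.
  by rewrite !inE => /andP[/andP[_ /eqP]].
move: (partc _ _ cI1) (partc _ _ cI2) => ci cj; subst i j.
by rewrite (comp_in_eq cI1) (comp_in_eq cI2).
Qed.

End Segments.

(** * The rooted block forest *)

Variable Rt : {set {set T}}.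
Hypothesis hRt : valid_roots e Z Rt.

Local Notation root := (root_of e Z Rt).

Lemma root_block R : R \in Rt -> block e Z R.
Proof. by move=> RR; case/andP: hRt => /forall_inP/(_ R RR). Qed.

Lemma root_ofP C : block e Z C ->
  [/\ root C \in Rt, same_comp e Z C (root C) &
      forall R, R \in Rt -> same_comp e Z C R -> R = root C].
Proof.
move=> bC; case/andP: hRt => _ /forallP/(_ C)/implyP/(_ bC)/cards1P[R0 HR0].
have memR0 R : (R \in Rt) && same_comp e Z C R = (R == R0) by rewrite -in_set1 -HR0 inE.
rewrite /root_of; case: pickP => [R /= HR | /(_ R0)]; last by rewrite memR0 eqxx.
move: (HR); rewrite memR0 => /eqP RR0; subst R; case/andP: HR => RR sCR; split=> //.
by move=> R' R'R sCR'; apply/eqP; rewrite -memR0 R'R sCR'.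
Qed.

Lemma root_of_conn C D u w : block e Z C -> block e Z D -> u \in C -> w \in D ->
  conn V u w -> root C = root D.
Proof.
move=> bC bD uC wD uw.
have [RR /exists_inP[x xC /exists_inP[y yR xy]] _] := root_ofP bC.
have [_ _ rootD] := root_ofP bD; apply: rootD => //.
apply/exists_inP; exists w => //; apply/exists_inP; exists y => //.
rewrite conn_in_sym in uw; apply: conn_in_trans uw _.
exact: conn_in_trans (block_conn bC uC xC) xy.
Qed.

Lemma root_of_root R : R \in Rt -> root R = R.
Proof.
move=> RR; have bR := root_block RR; have [x xR] := block_neq0 bR.
have [_ _ rootR] := root_ofP bR; apply/esym/rootR => //; apply/exists_inP; exists x => //.
by apply/exists_inP; exists x => //; apply: conn_in_refl.
Qed.

(* For the cut vertex c separating C from its root, the vertices hanging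
   below C at c. *)
Definition branch C c := [set y | [exists x in C :\ c, conn (V :\ c) x y]].

Lemma notin_branch C c : c \notin branch C c.
Proof.
rewrite inE; apply/exists_inP => -[x /setD1P[xc _] /conn_in_mem/(_ xc)].
by rewrite !inE eqxx.
Qed.

Lemma branch_conn C c z z' : z \in branch C c -> conn (V :\ c) z z' -> z' \in branch C c.
Proof.
rewrite !inE => /exists_inP[x xC xz] zz'.
by apply/exists_inP; exists x; last exact: conn_in_trans zz'.
Qed.

Lemma mem_branch C c x : x \in C :\ c -> x \in branch C c.
Proof. by move=> xC; rewrite inE; apply/exists_inP; exists x; last exact: conn_in_refl. Qed.

Lemma sep_vertexP R C c : reflect
  [/\ c \in C, C :\ c != set0, R :\ c != set0 &
      forall x y, x \in C :\ c -> y \in R :\ c -> ~~ conn (V :\ c) x y]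
  (sep_vertex e Z R C c).
Proof.
apply: (iffP and4P) => -[cC C0 R0 H]; split=> //.
  by move=> x y xC yR; move/forall_inP/(_ x xC)/forall_inP: H; apply.
by apply/forall_inP => x xC; apply/forall_inP => y yR; apply: H.
Qed.

Lemma branch_sep_vertex R C c y : sep_vertex e Z R C c -> y \in R -> y \notin branch C c.
Proof.
move=> /sep_vertexP[_ _ _ H] yR; apply/negP => yC.
have yc : y != c by apply: contraTneq yC => ->; apply: notin_branch.
move: yC; rewrite inE => /exists_inP[x xC]; apply/negP/H => //.
by rewrite !inE yc.
Qed.

Definition parent_at C P c := [&& sep_vertex e Z (root C) C c, c \in P &
  [exists x in P :\ c, exists y in root C :\ c, conn (V :\ c) x y]].

Lemma tparentP C P : reflect
  [/\ block e Z C, C \notin Rt, block e Z P, P != C & exists c, parent_at C P c]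
  (tparent e Z Rt C P).
Proof. by apply: (iffP and5P) => -[? ? ? ? /existsP ?]. Qed.

Lemma tparent_root_of C c :
  block e Z C -> C \notin Rt -> c \in C -> c \in root C -> tparent e Z Rt C (root C).
Proof.
move=> bC CNR cC cR; have [RR _ _] := root_ofP bC; have bR := root_block RR.
have RC : root C != C by apply: contraNneq CNR => <-.
have RcN0 := block_setD1_neq0 bR bC RC cC.
apply/tparentP; split=> //; exists c; apply/and3P; split=> //.
  apply/sep_vertexP; split=> //; first by rewrite (block_setD1_neq0 bC bR) // eq_sym.
  move=> x y xC yR; apply/negP => xy; move/eqP: RC; apply.
  exact/esym/(block_eq_of_connD1 bC bR cC cR xC yR).
case/set0Pn: RcN0 => x xR.
by apply/exists_inP; exists x => //; apply/exists_inP; exists x => //; apply: conn_in_refl.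
Qed.

Lemma edge_into_block C R x0 y0 : C :&: R = set0 ->
  x0 \in C -> y0 \in R -> R \subset V -> conn V x0 y0 ->
  exists u w y, [/\ e u w, u \in V :\: C, w \in C, y \in R & conn (V :\: C) y u].
Proof.
move=> CR0 x0C y0R RV x0y0.
have RNC y : y \in R -> y \notin C.
  by move=> yR; apply/negP => yC; move: CR0 => /setP/(_ y); rewrite !inE yC yR.
pose A := [set v | [exists y in R, conn (V :\: C) y v]].
have y0A : y0 \in A by rewrite inE; apply/exists_inP; exists y0 => //; apply: conn_in_refl.
have x0NA : x0 \notin A.
  rewrite inE; apply/exists_inP => -[y yR yx0]; have yx : y != x0.
    by apply: contraTneq yR => ->; apply/negP => /RNC; rewrite x0C.
  by have := conn_in_mem yx0 yx; rewrite inE x0C.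
rewrite conn_in_sym in x0y0.
have [u [w [/and3P[uV wV euw] uA wNA]]] := connect_exit_edge x0y0 y0A x0NA.
have {}wNA : w \notin A := wNA.
have : u \in A := uA; rewrite inE => /exists_inP[y yR yu].
have uVC : u \in V :\: C.
  case: (eqVneq y u) => [<-|yu']; last exact: conn_in_mem yu yu'.
  by rewrite inE RNC // (subsetP RV).
exists u, w, y; split=> //; apply: contraNT wNA => wNC.
rewrite inE; apply/exists_inP; exists y => //; apply: conn_in_trans yu _.
by apply: conn_in_edge; rewrite // inE wNC.
Qed.

Lemma tparent_edge C u w y : block e Z C -> C \notin Rt -> C :&: root C = set0 ->
  e u w -> u \in V :\: C -> w \in C -> y \in root C -> conn (V :\: C) y u ->
  exists P, tparent e Z Rt C P.
Proof.
move=> bC CNR CR0 euw /setDP[uV uNC] wC yR yu.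
have [RR _ _] := root_ofP bC; have bR := root_block RR.
have wNR : w \notin root C by apply/negP => wR; move: CR0 => /setP/(_ w); rewrite !inE wC wR.
have [P bP uwP] : exists2 P, block e Z P & [set u; w] \subset P.
  apply: block_exists (two_connected_edge euw).
  by rewrite subUset !sub1set uV (subsetP (block_sub bC)).
have [uP wP] : u \in P /\ w \in P by split; apply: (subsetP uwP); rewrite !inE eqxx ?orbT.
have PC : P != C by apply: contraNneq uNC => <-.
have yw : y != w by apply: contraNneq wNR => <-.
have uw : u != w by apply: contraNneq uNC => ->.
have uy : conn (V :\ w) u y.
  rewrite conn_in_sym; apply: conn_in_sub yu; apply/subsetP => v /setDP[vV vNC].
  by rewrite in_setD1 vV andbT; apply: contraNneq vNC => ->.
exists P; apply/tparentP; split=> //; exists w; apply/and3P; split=> //; last first.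
  apply/exists_inP; exists u; first by rewrite in_setD1 uw.
  by apply/exists_inP; exists y => //; rewrite in_setD1 yw.
apply/sep_vertexP; split=> //.
- by apply: block_setD1_neq0 bC bP _ wP; rewrite eq_sym.
- by apply/set0Pn; exists y; rewrite in_setD1 yw.
move=> x y' xC /setD1P[_ y'R]; apply/negP => xy'; move/eqP: PC; apply.
have uPw : u \in P :\ w by rewrite in_setD1 uw.
apply: (block_eq_of_connD1 bP bC wP wC uPw xC).
have yy' : conn (V :\ w) y y'.
  exact: conn_in_sub (block_subD1 bR wNR) (two_connected_conn (block_two_connected bR) yR y'R).
by rewrite conn_in_sym in xy'; apply: conn_in_trans uy (conn_in_trans yy' xy').
Qed.

Lemma tparent_exists C : block e Z C -> C \notin Rt -> exists P, tparent e Z Rt C P.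
Proof.
move=> bC CNR; have [RR /exists_inP[x0 x0C /exists_inP[y0 y0R x0y0]] _] := root_ofP bC.
case: (eqVneq (C :&: root C) set0) => [CR0 | /set0Pn[c /setIP[cC cR]]]; last first.
  by exists (root C); apply: tparent_root_of cC cR.
have [u [w [y [euw uVC wC yR yu]]]] :=
  edge_into_block CR0 x0C y0R (block_sub (root_block RR)) x0y0.
exact: tparent_edge euw uVC wC yR yu.
Qed.

Lemma branch_proper_tpar C P Q c c' :
  tparent e Z Rt C P -> parent_at C P c -> tparent e Z Rt P Q -> parent_at P Q c' ->
  branch C c \proper branch P c'.
Proof.
move=> /tparentP[bC _ bP _ _] /and3P[sepC cP /exists_inP[x xPc /exists_inP[y yRc xy]]].
move=> /tparentP[_ _ _ _ _] /and3P[sepP _ _].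
have /sep_vertexP[cC _ _ _] := sepC.
have rootPC : root P = root C by apply/esym/(root_of_conn bC bP cC cP (conn_in_refl _ _)).
rewrite rootPC in sepP; have /sep_vertexP[c'P _ _ NP] := sepP.
have cc' : c != c' by apply: contraTneq xy => cc'; rewrite cc' in xPc yRc *; apply: NP.
(* P - c reaches the root without passing c, and c' lies in P - c. *)
have c'NB : c' \notin branch C c.
  apply/negP => c'B; have c'Pc : c' \in P :\ c by rewrite in_setD1 c'P eq_sym cc'.
  have c'x : conn (V :\ c) c' x.
    have := two_connected_connD1 (block_two_connected bP) c'Pc xPc.
    exact: conn_in_sub (setSD _ (block_sub bP)).
  have [_ yR] := setD1P yRc.
  by have := branch_conn (branch_conn c'B c'x) xy; rewrite (negbTE (branch_sep_vertex sepC yR)).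
have c'NC : c' \notin C.
  by apply: contra c'NB => c'C; apply: mem_branch; rewrite in_setD1 c'C eq_sym cc'.
apply/properP; split; last first.
  by exists c; [apply: mem_branch; rewrite in_setD1 cc' cP | apply: notin_branch].
apply/subsetP => z; rewrite inE => /exists_inP[x' x'C x'z].
have x'z' : conn (V :\ c') x' z.
  have := conn_in_setI x'z (fun w x'w => branch_conn (mem_branch x'C) x'w).
  apply: conn_in_sub; apply/subsetP => w /setIP[/setD1P[_ wV] wB].
  by rewrite in_setD1 wV andbT; apply: contraNneq c'NB => <-.
rewrite inE; apply/exists_inP; exists c; first by rewrite in_setD1 cc' cP.
apply: conn_in_trans x'z'; apply: conn_in_sub (block_subD1 bC c'NC) _.
by have [_ x'C'] := setD1P x'C; apply: two_connected_conn (block_two_connected bC) cC x'C'.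
Qed.

Local Notation tp := (tpar e Z Rt).

Lemma tpar_some C P : tp C = Some P -> tparent e Z Rt C P.
Proof. by rewrite /tpar; case: pickP => // P' tCP' [<-]. Qed.

Lemma tpar_root C : C \in Rt -> tp C = None.
Proof. by move=> CR; rewrite /tpar; case: pickP => // P /tparentP[_ /negP]. Qed.

Lemma tpar_nonroot C : block e Z C -> C \notin Rt -> exists P, tp C = Some P.
Proof.
move=> bC CNR; have [P tCP] := tparent_exists bC CNR.
by rewrite /tpar; case: pickP => [Q _ | /(_ P)]; [exists Q | rewrite tCP].
Qed.

(* Since branches grow strictly and never contain their cut vertex, a
   parent chain has fewer than #|T| steps. *)
Lemma tpar_iter_None k C P c : tparent e Z Rt C P -> parent_at C P c ->
  #|T| <= k + #|branch C c| -> iter k (obind tp) (Some P) = None.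
Proof.
elim: k C P c => [|k IH] C P c tCP PC.
  rewrite add0n leqNgt -cardsT proper_card //; apply/properP; split; first exact: subsetT.
  by exists c; [apply: in_setT | apply: notin_branch].
rewrite iterSr /= => Hk; case tPQ: (tp P) => [Q|]; last exact: iter_obind_None.
have tPQ' := tpar_some tPQ; have /tparentP[_ _ _ _ [c' QP]] := tPQ'.
apply: (IH P Q c' tPQ' QP); apply: leq_trans Hk _.
by rewrite addSn -addnS leq_add2l; apply/proper_card/(branch_proper_tpar tCP PC tPQ').
Qed.

Lemma tpar_iter_card C : block e Z C -> iter #|T| (obind tp) (Some C) = None.
Proof.
move=> bC; have [x xC] := block_neq0 bC.
have T0 : 0 < #|T| by apply/card_gt0P; exists x.
rewrite -(prednK T0) iterSr /=; case tCP: (tp C) => [P|]; last exact: iter_obind_None.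
have tCP' := tpar_some tCP; have /tparentP[_ _ _ _ [c PC]] := tCP'.
apply: (tpar_iter_None tCP' PC); rewrite -{1}(prednK T0) -addn1 leq_add2l card_gt0.
case/and3P: PC => /sep_vertexP[_ /set0Pn[y yC] _ _] _ _.
by apply/set0Pn; exists y; apply: mem_branch.
Qed.

Local Notation depth := (depth e Z Rt).

Lemma depth_spec C : block e Z C ->
  iter (depth C).+1 (obind tp) (Some C) = None /\
  forall j, j < depth C -> iter j.+1 (obind tp) (Some C) != None.
Proof.
move=> bC; have [x xC] := block_neq0 bC.
have T0 : 0 < #|T| by apply/card_gt0P; exists x.
have TN : #|T|.-1 < #|{set T}| by rewrite prednK //; exact: leq_card (@set1_inj T).
have stopT : iter #|T|.-1.+1 (obind tp) (Some C) == None by rewrite prednK // tpar_iter_card.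
have [/eqP stop least] :=
  find_iota_least (a := fun n => iter n.+1 (obind tp) (Some C) == None) TN stopT.
by split=> // j /least.
Qed.

Lemma depth_root C : C \in Rt -> depth C = 0.
Proof.
move=> CR; have [_ least] := depth_spec (root_block CR).
by case: (depth C) least => // d /(_ 0 isT); rewrite /= tpar_root.
Qed.

Lemma depth_tpar C P : block e Z C -> tp C = Some P -> depth C = (depth P).+1.
Proof.
move=> bC tCP; have /tparentP[_ _ bP _ _] := tpar_some tCP.
have [stopC leastC] := depth_spec bC; have [stopP leastP] := depth_spec bP.
have iterC j : iter j.+2 (obind tp) (Some C) = iter j.+1 (obind tp) (Some P).
  by rewrite iterSr /= tCP.
case: (ltngtP (depth C) (depth P).+1) => [|/leastC|//]; last by rewrite iterC stopP.
case: (depth C) stopC => [|d]; first by rewrite /= tCP.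
by rewrite iterC ltnS => stop /leastP; rewrite stop.
Qed.

Lemma tpar_meet_branch C P c D : tparent e Z Rt C P -> parent_at C P c ->
  block e Z D -> D != C -> meets (branch C c) D ->
  exists2 Q, tp D = Some Q & Q = C \/ Q != C /\ meets (branch C c) Q.
Proof.
move=> /tparentP[bC _ _ _ _] /and3P[sepC _ _] bD DC /set0Pn[y /setIP[yB yD]].
have /sep_vertexP[cC _ _ _] := sepC.
have yc : y != c by apply: contraTneq yB => ->; apply: notin_branch.
move: (yB); rewrite inE => /exists_inP[x xC xy]; have [_ x1] := setD1P xC.
have rootCD : root C = root D.
  exact: root_of_conn bC bD x1 yD (conn_in_sub (subD1set _ _) xy).
have DNR : D \notin Rt.
  by apply: contraTN yB => DR; apply: branch_sep_vertex sepC _; rewrite rootCD root_of_root.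
have [Q tDQ] := tpar_nonroot bD DNR; exists Q => //.
have /tparentP[_ _ _ _ [d /and3P[/sep_vertexP[dD _ _ _] dQ _]]] := tpar_some tDQ.
have dc : d != c.
  apply: contraNneq DC => dc; rewrite dc in dD; apply/eqP/esym.
  by apply: block_eq_of_connD1 bC bD cC dD xC _ xy; rewrite in_setD1 yc.
case: (eqVneq Q C) => [|QC]; [by left | right; split=> //].
apply/set0Pn; exists d; rewrite inE (branch_conn yB) ?dQ //.
apply: conn_in_sub (setSD _ (block_sub bD)) (two_connected_connD1 (block_two_connected bD) _ _).
  by rewrite in_setD1 yc.
by rewrite in_setD1 dc.
Qed.

Lemma depth_lt_meet_branch C P c D : tparent e Z Rt C P -> parent_at C P c ->
  block e Z D -> D != C -> meets (branch C c) D -> depth C < depth D.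
Proof.
move=> tCP PC; move: {2}(depth D) (leqnn (depth D)) => n.
elim: n D => [|n IH] D + bD DC DB; have [Q tDQ HQ] := tpar_meet_branch tCP PC bD DC DB;
  rewrite (depth_tpar bD tDQ) // ltnS => dQ.
have /tparentP[_ _ bQ _ _] := tpar_some tDQ.
by case: HQ => [->//|[QC QB]]; apply: ltn_trans (IH Q dQ bQ QC QB) _.
Qed.

Lemma rZP I t : block e Z t -> meets I t ->
  exists r, [/\ rZ e Z Rt I = Some r, block e Z r, meets I r &
    forall t', block e Z t' -> meets I t' -> depth r <= depth t'].
Proof.
move=> bt mt; pose P s := block e Z s && meets I s.
have [r /andP[br mr] rmin] := @arg_minnP _ t P depth (introT andP (conj bt mt)).
have rP : [&& block e Z r, meets I r &
    [forall t', (block e Z t' && meets I t') ==> (depth r <= depth t')]].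
  by rewrite br mr; apply/forallP => t'; apply/implyP; apply: rmin.
rewrite /rZ; case: pickP => [r' /and3P[br' mr' /forallP r'min] | /(_ r)]; last first.
  by rewrite rP.
by exists r'; split=> // t' bt' mt'; move/implyP: (r'min t'); apply; rewrite bt' mt'.
Qed.

Lemma body_rZ I t : t \in body e Z Rt I ->
  exists r, [/\ block e Z r, r != t, meets I r & depth r <= depth t].
Proof.
rewrite inE => /and3P[bt mt tNr]; have [r [rZr br mr rmin]] := rZP bt mt.
by exists r; split=> //; [apply: contraNneq tNr => <-; rewrite rZr | apply: rmin].
Qed.

Section Body.
Variables (l : nat) (part : T -> 'I_l) (I : {set T}).
Hypothesis segI : segment e part Z I.

Lemma body_nonroot t : t \in body e Z Rt I -> t \notin Rt.
Proof.
move=> tB; have [r [br rt /set0Pn[b /setIP[bI br']] drt]] := body_rZ tB.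
move: tB; rewrite inE => /and3P[bt /set0Pn[a /setIP[aI at']] _].
apply/negP => tR; rewrite (depth_root tR) leqn0 in drt.
have rR : r \in Rt.
  apply: contraTT drt => rNR; have [q rq] := tpar_nonroot br rNR.
  by rewrite (depth_tpar br rq).
have ab := conn_in_sub (segment_sub segI) (segment_conn segI aI bI).
have := root_of_conn bt br at' br' ab; rewrite !root_of_root // => tr.
by move: rt; rewrite tr eqxx.
Qed.

Lemma body_cut_vertex t P c : t \in body e Z Rt I ->
  tparent e Z Rt t P -> parent_at t P c -> c \in I.
Proof.
move=> tB tP Pc; have [r [br rt /set0Pn[b /setIP[bI br']] drt]] := body_rZ tB.
move: tB; rewrite inE => /and3P[bt /set0Pn[a /setIP[aI at']] _].
apply: contraLR drt => cNI; rewrite -ltnNge; apply: depth_lt_meet_branch tP Pc br rt _.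
apply/set0Pn; exists b; rewrite inE br' andbT inE; apply/exists_inP; exists a.
  by rewrite in_setD1 at' andbT; apply: contraNneq cNI => <-.
apply: conn_in_sub (segment_conn segI aI bI); apply/subsetP => w wI.
by rewrite in_setD1 (subsetP (segment_sub segI)) // andbT; apply: contraNneq cNI => <-.
Qed.

End Body.

End BlockForest.

Theorem lemma4p10 (T : finType) (e : rel T) (l : nat) (part : T -> 'I_l)
  (Z : {set T}) (Rt : {set {set T}})
  (e_sym : symmetric e) (e_irr : irreflexive e)
  (hRt : valid_roots e Z Rt)
  (I1 I2 : {set T})
  (hI1 : segment e part Z I1) (hI2 : segment e part Z I2)
  (hne : I1 != I2) :
  body e Z Rt I1 :&: body e Z Rt I2 = set0.
Proof.
apply/setP => t; rewrite inE in_set0; apply/andP => -[tB1 tB2].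
have bt : block e Z t by move: tB1; rewrite inE => /andP[].
have [P tP] := tparent_exists e_sym hRt bt (body_nonroot e_sym hRt hI1 tB1).
have /tparentP[_ _ _ _ [c Pc]] := tP.
have cI1 := body_cut_vertex e_sym hRt hI1 tB1 tP Pc.
have cI2 := body_cut_vertex e_sym hRt hI2 tB2 tP Pc.
by move/eqP: hne; apply; apply: segment_eq hI1 hI2 cI1 cI2.
Qed.
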